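(* Let $H=(\mathcal{V},\mathcal{I})$ be an interval hypergraph and let $\mathcal{P}=\{S_1,\dots,S_k\}$ be a partition of $\mathcal{I}$ such that each $S_i$ has an exact hitting set $h_i$. Let $R=\bigcup_{i=1}^k h_i$ and define $t:\mathcal{I}\to\mathcal{V}$ by letting $t(I)$ be the unique element of $I\cap h_i$, where $S_i$ is the part containing $I$. Then the clique number of the co-occurrence graph $G_{R,t}$ is at most $k$.
   Context: An interval hypergraph has vertex set $[n]=\{1,\dots,n\}$ and hyperedges that are nonempty sets of consecutive integers. An exact hitting set of a family $S$ of hyperedges is a set $h\subseteq\mathcal{V}$ with $|h\cap I|=1$ for every $I\in S$. For a representative function $t$ (with $t(I)\in I$) and its image $R$, the co-occurrence graph $G_{R,t}$ has vertex set $R$, with distinct $u,v$ adjacent iff some $I\in\mathcal{I}$ has $u,v\in I$ and $t(I)\in\{u,v\}$. *)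

From mathcomp Require Import all_boot all_order.
Set Implicit Arguments. Unset Strict Implicit. Unset Printing Implicit Defensive.

(* Vertex set [n] = {1,...,n} is represented by 'I_n = {0,...,n-1} (shift by one). *)

Definition is_interval (n : nat) (I : {set 'I_n}) : Prop :=
  I != set0 /\
  forall x y z : 'I_n, x \in I -> z \in I -> (x <= y <= z)%N -> y \in I.

Definition exact_hitting_set (n : nat) (S : {set {set 'I_n}}) (h : {set 'I_n}) : Prop :=
  forall I, I \in S -> #|I :&: h| = 1%N.

Definition cooc_adj (n : nat) (E : {set {set 'I_n}}) (R : {set 'I_n})
  (t : {set 'I_n} -> 'I_n) (u v : 'I_n) : bool :=
  [&& u \in R, v \in R, u != v &
   [exists I in E, [&& u \in I, v \in I & (t I == u) || (t I == v)]]].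

Definition is_clique (n : nat) (E : {set {set 'I_n}}) (R : {set 'I_n})
  (t : {set 'I_n} -> 'I_n) (C : {set 'I_n}) : bool :=
  (C \subset R) &&
  [forall u in C, forall v in C, (u != v) ==> cooc_adj E R t u v].

Definition clique_number (n : nat) (E : {set {set 'I_n}}) (R : {set 'I_n})
  (t : {set 'I_n} -> 'I_n) : nat :=
  \max_(C : {set 'I_n} | is_clique E R t C) #|C|.

From mathcomp Require Import all_boot all_order.
Set Implicit Arguments. Unset Strict Implicit. Unset Printing Implicit Defensive.

(* Every nonempty clique C meets some h S in exactly one point: trivially if C
   is a singleton, since C is contained in R.  Otherwise, if u < v are
   the extreme points of C, an edge I of G_{R,t} joining them is an interval,
   so C is contained in I; and I meets h S, for the part S containing I, only
   in t I, which is u or v.  Removing that point leaves a clique avoiding h S,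
   so by induction |C| is at most the number of parts whose hitting set meets
   C. *)

Section PeelingBound.

Variables (T J : finType) (D : {set J}) (A : J -> {set T}) (Q : pred {set T}).

Hypothesis Q_subset : forall C C' : {set T}, C' \subset C -> Q C -> Q C'.
Hypothesis peel : forall C : {set T}, Q C -> C != set0 ->
  exists2 i, i \in D & exists x, C :&: A i = [set x].

Lemma card_le_meeting_indices C :
  Q C -> #|C| <= #|[set i in D | C :&: A i != set0]|.
Proof.
have [m] := ubnP #|C|; elim: m C => // m IH C ltCm QC.
have [->|nzC] := eqVneq C set0; first by rewrite cards0.
have [i Di [x CAi]] := peel QC nzC.
have /setIP[xC xAi] : x \in C :&: A i by rewrite CAi set11.
set C' := C :\ x.
have cardC : #|C| = #|C'|.+1 by rewrite (cardsD1 x C) xC.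
have C'Ai : C' :&: A i = set0.
  by apply/setP => y; rewrite !inE -andbA -(in_setI y C) CAi inE; case: eqP.
have sub_hit : [set j in D | C' :&: A j != set0]
               \subset [set j in D | C :&: A j != set0] :\ i.
  apply/subsetP => j; rewrite !inE => /andP[Dj /set0Pn[y /setIP[yC' yAj]]].
  rewrite Dj /= andbC; apply/andP; split.
    by apply/set0Pn; exists y; rewrite inE (subsetP (subsetDl C [set x])) // yAj.
  apply: contra_eqN C'Ai => /eqP eji.
  by apply/set0Pn; exists y; rewrite inE yC' -eji.
have iC : i \in [set j in D | C :&: A j != set0].
  by rewrite inE Di CAi; apply/set0Pn; exists x; rewrite set11.
rewrite cardC (cardsD1 i) iC ltnS.
apply: leq_trans (subset_leq_card sub_hit).
by apply: IH (Q_subset (subsetDl _ _) QC); rewrite -ltnS -cardC.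
Qed.

End PeelingBound.

Lemma is_clique_subset n (E : {set {set 'I_n}}) (R : {set 'I_n})
    (t : {set 'I_n} -> 'I_n) (C C' : {set 'I_n}) :
  C' \subset C -> is_clique E R t C -> is_clique E R t C'.
Proof.
move=> sC'C /andP[CR /forall_inP adj]; rewrite /is_clique (subset_trans sC'C CR).
apply/forall_inP => u uC'; apply/forall_inP => v vC'.
by have /forall_inP := adj u (subsetP sC'C u uC'); apply; apply: (subsetP sC'C).
Qed.

Lemma interval_sub_span n (I C : {set 'I_n}) (u v : 'I_n) :
  is_interval I -> u \in I -> v \in I -> {in C, forall w : 'I_n, u <= w <= v} ->
  C \subset I.
Proof. by move=> [_ convI] uI vI spanC; apply/subsetP => w /spanC; apply: convI. Qed.

Section CoocClique.

Variables (n : nat) (E : {set {set 'I_n}}) (P : {set {set {set 'I_n}}}).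
Variables (h : {set {set 'I_n}} -> {set 'I_n}) (t : {set 'I_n} -> 'I_n).

Hypothesis E_interval : forall I, I \in E -> is_interval I.
Hypothesis P_partition : partition P E.
Hypothesis h_exact : forall S, S \in P -> exact_hitting_set S (h S).
Hypothesis t_rep : forall S I, S \in P -> I \in S -> t I \in I :&: h S.

Local Notation R := (\bigcup_(S in P) h S).

Lemma clique_meets_part_once (C : {set 'I_n}) :
  is_clique E R t C -> C != set0 ->
  exists2 S, S \in P & exists x, C :&: h S = [set x].
Proof.
move=> /andP[CR /forall_inP adj] /set0Pn[c cC].
have [u uC umin] := arg_minnP (fun i : 'I_n => val i) cC.
have [v vC vmax] := arg_maxnP (fun i : 'I_n => val i) cC.
have [euv|uv] := eqVneq u v.
  have Cu : C = [set u].
    apply/setP => w; rewrite inE; apply/idP/eqP => [wC|->//].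
    by apply/val_inj/eqP; rewrite eqn_leq umin // andbT euv; apply: vmax.
  have /bigcupP[S SP uS] := subsetP CR u uC.
  by exists S => //; exists u; rewrite Cu; apply/setIidPl; rewrite sub1set.
have /forall_inP/(_ v vC) := adj u uC; rewrite uv /=.
case/and4P => _ _ _ /existsP[I /and4P[IE uI vI tI]].
have /bigcupP[S SP IS] : I \in cover P by rewrite (cover_partition P_partition).
have CI : C \subset I.
  apply: interval_sub_span (E_interval IE) uI vI _ => w wC.
  by rewrite umin //; apply: vmax.
have tC : t I \in C by case/orP: tI => /eqP ->.
exists S => //; exists (t I); apply/eqP.
rewrite eq_sym eqEcard sub1set inE tC (setIP (t_rep SP IS)).2 cards1.
by rewrite -(h_exact SP IS) subset_leq_card // setSI.
Qed.

End CoocClique.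

Theorem lemma8 (n : nat) (E : {set {set 'I_n}})
  (P : {set {set {set 'I_n}}}) (h : {set {set 'I_n}} -> {set 'I_n})
  (t : {set 'I_n} -> 'I_n) :
  (forall I, I \in E -> is_interval I) ->
  partition P E ->
  (forall S, S \in P -> exact_hitting_set S (h S)) ->
  (forall S I, S \in P -> I \in S -> t I \in I :&: h S) ->
  (clique_number E (\bigcup_(S in P) h S) t <= #|P|)%N.
Proof.
move=> E_interval P_partition h_exact t_rep.
apply/bigmax_leqP => C clC.
have peel := clique_meets_part_once E_interval P_partition h_exact t_rep.
apply: leq_trans (card_le_meeting_indices (@is_clique_subset _ E _ t) peel clC) _.
by apply: subset_leq_card; apply/subsetP => S; rewrite inE => /andP[].
Qed.
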